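(* Let $K$ be a subcomplex of a simplicial complex $L$, and assume $K$ is balanced, with a fixed proper $(\dim K+1)$-coloring. Then there exists a complex $L'$ obtained from $L$ by a finite sequence of stellar subdivisions such that (i) $K$ is a subcomplex of $L'$, (ii) $L'$ is balanced, and (iii) there is a proper $(\dim L'+1)$-coloring of $L'$ extending the given coloring of $K$.
   Context: All simplicial complexes are finite abstract simplicial complexes. The stellar subdivision of $\Delta$ at a nonempty face $F$ is $\mathrm{sd}_F(\Delta)=\{G\in\Delta: F\not\subseteq G\}\cup(\overline{\{a\}}*\partial\overline{F}*\mathrm{lk}_\Delta(F))$, where $a$ is a new vertex, $\overline{F}$ is the simplex of all subsets of $F$, $\partial\overline{F}$ the complex of its proper subsets, $*$ the join, and $\mathrm{lk}_\Delta(F)=\{G\in\Delta: F\cap G=\emptyset, F\cup G\in\Delta\}$. A proper $m$-coloring maps vertices to $\{0,\dots,m-1\}$ with distinct colors on the endpoints of each edge; a $d$-dimensional complex is balanced if it has a proper $(d+1)$-coloring. *)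

From mathcomp Require Import all_boot.
Set Implicit Arguments. Unset Strict Implicit. Unset Printing Implicit Defensive.

(* Vertices are natural numbers (an infinite supply, needed for the new
   vertices of stellar subdivisions).  A face is a finite set of vertices,
   represented canonically by a strictly increasing list.  A (finite abstract
   simplicial) complex is a finite list of faces closed under taking subfaces;
   repetitions in the list are irrelevant: complexes are compared via
   membership. *)
Definition face := seq nat.
Definition complex := seq face.

Definition face_ok (F : face) : Prop := sorted ltn F.

Definition is_complex (D : complex) : Prop :=
  (forall G, G \in D -> face_ok G) /\
  (forall G H, G \in D -> face_ok H -> {subset H <= G} -> H \in D).

Definition has_face (D : complex) (s : seq nat) : Prop :=
  exists2 H, H \in D & H =i s.

Definition is_vertex (D : complex) (v : nat) : Prop :=
  exists2 G, G \in D & v \in G.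

Definition subcomplex (K L : complex) : Prop := {subset K <= L}.

Definition in_link (D : complex) (F C : face) : Prop :=
  C \in D /\ (forall x, x \in F -> x \notin C) /\ has_face D (F ++ C).

(* D' is (a copy of) the stellar subdivision of D at the nonempty face F,
   with new vertex a:  {G in D : F not subset G} \cup ({a}-bar * dF-bar * lk F). *)
Definition stellar (D : complex) (F : face) (a : nat) (D' : complex) : Prop :=
  F \in D /\ F <> [::] /\ ~ is_vertex D a /\ is_complex D' /\
  forall G, face_ok G ->
    (G \in D' <->
      ((G \in D /\ ~ {subset F <= G}) \/
       exists A B C : face,
         {subset A <= [:: a]} /\
         ({subset B <= F} /\ ~ {subset F <= B}) /\
         in_link D F C /\
         G =i A ++ B ++ C)).

Inductive stellar_seq : complex -> complex -> Prop :=
  | ss_refl D : stellar_seq D D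
  | ss_step D F a D1 D2 : stellar D F a D1 -> stellar_seq D1 D2 -> stellar_seq D D2.

(* dim D + 1 = maximal number of vertices of a face (0 for the empty complex
   and for {emptyset}, matching dim = -1). *)
Definition dim1 (D : complex) : nat := \max_(G <- D) size G.

Definition proper_coloring (D : complex) (m : nat) (c : nat -> nat) : Prop :=
  (forall v, is_vertex D v -> c v < m) /\
  (forall G, G \in D -> size G = 2 ->
     forall u v, u \in G -> v \in G -> u != v -> c u != c v).

Definition balanced (D : complex) : Prop :=
  exists c, proper_coloring D (dim1 D) c.

From mathcomp Require Import all_boot zify.
Set Implicit Arguments. Unset Strict Implicit. Unset Printing Implicit Defensive.

(* Start from the coloring that keeps the colors of K and gives every other
   vertex a color of its own, at least n = dim L + 1.  Two adjacent vertices
   can then only share a color if both lie in K; the edge joining them is not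
   in K, since K is properly colored, and subdividing it at a fresh vertex
   removes the clash without touching K.  Stellar subdivisions preserve the
   dimension, so it remains to get rid of the colors >= n, one vertex a at a
   time: give a the first color x of the palette {0, ..., n-1}, and for each
   neighbour w already colored x subdivide the edge aw at a fresh vertex b,
   which separates a from w; b is then recolored recursively from the palette
   without x.  A face through b lies, b aside, in a face through a and w, so
   it carries fewer palette colors than the faces through a did, and the
   recursion terminates. *)

Lemma face_ok_uniq G : face_ok G -> uniq G.
Proof. exact: (sorted_uniq ltn_trans ltnn). Qed.

Lemma face_ok_eq G H : face_ok G -> face_ok H -> G =i H -> G = H.
Proof. exact: (irr_sorted_eq ltn_trans ltnn). Qed.

Definition face_of (s : seq nat) : face := sort leq (undup s).

Lemma face_of_ok s : face_ok (face_of s).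
Proof.
rewrite /face_ok ltn_sorted_uniq_leq sort_uniq undup_uniq.
exact/sort_sorted/leq_total.
Qed.

Lemma mem_face_of s : face_of s =i s.
Proof. by move=> x; rewrite mem_sort mem_undup. Qed.

Lemma size_face_of s : uniq s -> size (face_of s) = size s.
Proof. by move=> us; rewrite size_sort undup_id. Qed.

Lemma sub_face_of2 u v (G : face) :
  {subset face_of [:: u; v] <= G} <-> (u \in G) && (v \in G).
Proof.
split=> [sG | /andP[uG vG] x].
  by rewrite !sG // mem_face_of !inE eqxx ?orbT.
by rewrite mem_face_of !inE => /orP[] /eqP->.
Qed.

Section Complex.
Variables (D : complex).
Hypothesis cD : is_complex D.

Lemma complex_face_ok G : G \in D -> face_ok G.
Proof. by case: cD => h _; apply: h. Qed.

Lemma complex_sub G H : G \in D -> face_ok H -> {subset H <= G} -> H \in D.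
Proof. by case: cD => _ h; apply: h. Qed.

Lemma complex_face_of G s : G \in D -> {subset s <= G} -> face_of s \in D.
Proof.
by move=> GD sG; apply: complex_sub GD (face_of_ok s) _ => x; rewrite mem_face_of => /sG.
Qed.

Lemma complex_edge G u v : G \in D -> u \in G -> v \in G -> face_of [:: u; v] \in D.
Proof.
by move=> GD uG vG; apply: (complex_face_of GD) => x; rewrite !inE => /orP[] /eqP->.
Qed.

Lemma complex_filter G (p : pred nat) : G \in D -> filter p G \in D.
Proof.
move=> GD; apply: (complex_sub GD); last by move=> x; rewrite mem_filter => /andP[].
exact/(sorted_filter ltn_trans)/(complex_face_ok GD).
Qed.

End Complex.

Definition vertexb (D : complex) v := has (fun G => v \in G) D.

Lemma vertexbP D v : reflect (is_vertex D v) (vertexb D v).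
Proof. exact: hasP. Qed.

Lemma vertexb_of (D : complex) G v : G \in D -> v \in G -> vertexb D v.
Proof. by move=> GD vG; apply/hasP; exists G. Qed.

Lemma vertexb_flatten (D : complex) v : vertexb D v = (v \in flatten D).
Proof. by apply/hasP/flattenP => -[G GD vG]; exists G. Qed.

Definition adjacent (D : complex) u v := has (fun G => (u \in G) && (v \in G)) D.

Lemma adjacent_of (D : complex) G u v : G \in D -> u \in G -> v \in G -> adjacent D u v.
Proof. by move=> GD uG vG; apply/hasP; exists G; rewrite ?uG. Qed.

Definition fresh (D : complex) := (\max_(G <- D) \max_(v <- G) v).+1.

Lemma vertexb_fresh (D : complex) v : vertexb D v -> v != fresh D.
Proof.
case/hasP=> G GD vG; rewrite neq_ltn; apply/orP; left; rewrite ltnS.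
apply: leq_trans (@leq_bigmax_seq _ _ xpredT (fun G : face => \max_(v <- G) v) _ GD isT).
exact: (@leq_bigmax_seq _ _ xpredT id _ vG isT).
Qed.

Lemma fresh_not_vertex D : ~ is_vertex D (fresh D).
Proof. by move/vertexbP/vertexb_fresh; rewrite eqxx. Qed.

Lemma leq_dim1 (D : complex) G : G \in D -> size G <= dim1 D.
Proof. by move=> GD; exact: (@leq_bigmax_seq _ _ xpredT size _ GD isT). Qed.

Lemma stellar_seq_trans A B C : stellar_seq A B -> stellar_seq B C -> stellar_seq A C.
Proof. by elim=> // D F a D1 D2 s _ IH /IH; apply: ss_step s. Qed.

Definition stellar_face (D : complex) (F : face) (a : nat) (G : face) : Prop :=
  (G \in D /\ ~ {subset F <= G}) \/
  exists A B C : face,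
    {subset A <= [:: a]} /\
    ({subset B <= F} /\ ~ {subset F <= B}) /\
    in_link D F C /\
    G =i A ++ B ++ C.

Definition stellar_sd (D : complex) (F : face) (a : nat) : complex :=
  [seq G <- D | ~~ all (mem G) F] ++
  [seq face_of (a :: B ++ C)
     | B <- [seq B <- D | all (mem F) B && ~~ all (mem B) F],
       C <- [seq C <- D | all (fun x => x \notin F) C &&
                          has (fun H => all (mem H) (F ++ C)) D]].

Lemma vertex_neq (D : complex) a G x : ~ is_vertex D a -> G \in D -> x \in G -> x != a.
Proof. by move=> aD GD xG; apply/eqP=> xa; apply: aD; exists G; rewrite -?xa. Qed.

Section StellarConstruction.
Variables (D : complex) (F : face) (a : nat).
Hypotheses (cD : is_complex D) (FD : F \in D) (aD : ~ is_vertex D a).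

Let not_a G x : G \in D -> x \in G -> x != a := vertex_neq aD.

Lemma stellar_sd_face G : G \in stellar_sd D F a -> stellar_face D F a G.
Proof.
rewrite mem_cat => /orP[|].
  rewrite mem_filter => /andP[/negP nFG GD]; left; split=> // /allP; exact: nFG.
case/allpairsP=> -[B C] /= [].
rewrite mem_filter => /andP[/andP[/allP BF /negP nFB] BD].
rewrite mem_filter => /andP[/andP[/allP dC /hasP[H HD /allP FCH]] CD] ->.
right; exists [:: a], B, C; split=> //; split; first by split=> // /allP.
split; last by move=> x; rewrite mem_face_of.
split=> //; split; first by move=> x xF; apply/negP=> /dC; rewrite xF.
exists [seq x <- H | x \in F ++ C]; first exact: complex_filter.
by move=> x; rewrite mem_filter andb_idr // => /FCH.
Qed.

Lemma stellar_face_sd G : face_ok G -> stellar_face D F a G -> G \in stellar_sd D F a.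
Proof.
move=> okG [[GD nFG] | [A [B [C [aA [[BF nFB] [[CD [dC [H HD HFC]]] GE]]]]]]].
  by rewrite mem_cat mem_filter GD andbT; apply/orP; left; apply/negP=> /allP.
have FH : {subset F <= H} by move=> x xF; rewrite HFC mem_cat xF.
have CH : {subset C <= H} by move=> x xC; rewrite HFC mem_cat xC orbT.
rewrite mem_cat; case aG: (a \in G); apply/orP; [right | left].
  (* [B] need not be sorted: its sorted copy is cut out of [F]. *)
  apply/allpairsP; exists ([seq x <- F | x \in B], C) => /=; split.
  - rewrite mem_filter complex_filter // andbT; apply/andP; split.
      by apply/allP=> x; rewrite mem_filter => /andP[].
    by apply/negP=> /allP FB; apply: nFB => x /FB /=; rewrite mem_filter => /andP[].
  - rewrite mem_filter CD andbT; apply/andP; split.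
      by apply/allP=> x xC; apply/negP=> xF; move: (dC x xF); rewrite xC.
    by apply/hasP; exists H => //; apply/allP=> x; rewrite mem_cat => /orP[/FH | /CH].
  apply: face_ok_eq okG (face_of_ok _) _ => x.
  rewrite mem_face_of in_cons mem_cat mem_filter; apply/idP/idP.
    rewrite GE !mem_cat => /or3P[/aA | xB | ->]; last by rewrite !orbT.
      by rewrite inE => ->.
    by rewrite xB (BF _ xB) orbT.
  by case/or3P=> [/eqP-> // | /andP[xB _] | xC]; rewrite GE !mem_cat ?xB ?xC ?orbT.
rewrite mem_filter; apply/andP; split.
  apply/negP=> /allP FG; apply: nFB => x xF.
  have /= := FG x xF; rewrite GE !mem_cat => /or3P[/aA | // | xC].
    by rewrite inE => /eqP xa; move: (not_a FD xF); rewrite xa eqxx.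
  by move: (dC x xF); rewrite xC.
apply: (complex_sub cD HD okG) => x; rewrite GE !mem_cat => /or3P[xA | /BF/FH // | /CH //].
by move: (aA x xA) aG; rewrite inE GE !mem_cat => /eqP<-; rewrite xA.
Qed.

Lemma stellar_sd_face_ok G : G \in stellar_sd D F a -> face_ok G.
Proof.
rewrite mem_cat => /orP[|]; first by rewrite mem_filter => /andP[_ /(complex_face_ok cD)].
by case/allpairsP=> -[B C] [_ _ ->]; apply: face_of_ok.
Qed.

Lemma stellar_sd_complex : is_complex (stellar_sd D F a).
Proof.
split=> [|G H GS okH HG]; first exact: stellar_sd_face_ok.
apply: (stellar_face_sd okH).
case: (stellar_sd_face GS) => [[GD nFG] | [A [B [C [aA [[BF nFB] [[CD [dC [H0 H0D HFC]]] GE]]]]]]].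
  left; split; first exact: (complex_sub cD GD okH HG).
  by move=> FH; apply: nFG => x /FH /HG.
right; exists [seq x <- A | x \in H], [seq x <- B | x \in H], [seq x <- C | x \in H].
split; first by move=> x; rewrite mem_filter => /andP[_ /aA].
split.
  split; first by move=> x; rewrite mem_filter => /andP[_ /BF].
  by move=> FB; apply: nFB => x /FB /=; rewrite mem_filter => /andP[].
split; last first.
  move=> x; rewrite !mem_cat !mem_filter; apply/idP/idP; last by case/or3P=> /andP[].
  by move=> xH; move: (HG x xH); rewrite GE !mem_cat xH.
split; first exact: complex_filter.
split; first by move=> x /dC; rewrite mem_filter negb_and => ->; rewrite orbT.
exists [seq x <- H0 | x \in F ++ [seq x <- C | x \in H]]; first exact: complex_filter.
move=> x; rewrite mem_filter; apply/andP/idP=> [[] // | xFC]; split=> //.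
by rewrite HFC; move: xFC; rewrite !mem_cat mem_filter => /orP[-> | /andP[_ ->]]; rewrite ?orbT.
Qed.

Lemma stellar_sd_stellar : F <> [::] -> stellar D F a (stellar_sd D F a).
Proof.
move=> Fn; do 4!split=> //; first exact: stellar_sd_complex.
by move=> G okG; split; [apply: stellar_sd_face | apply: stellar_face_sd].
Qed.

End StellarConstruction.

Section StellarFacts.
Variables (D : complex) (F : face) (a : nat) (D' : complex).
Hypotheses (cD : is_complex D) (st : stellar D F a D').

Let FD : F \in D. Proof. by case: st. Qed.
Let Fn : F <> [::]. Proof. by case: st => _ []. Qed.
Let aD : ~ is_vertex D a. Proof. by case: st => _ [_ []]. Qed.
Let not_a G x : G \in D -> x \in G -> x != a := vertex_neq aD.

Lemma stellar_complex : is_complex D'.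
Proof. by case: st => _ [_ [_ []]]. Qed.

Let memD' G : face_ok G -> G \in D' <-> stellar_face D F a G.
Proof. by case: st => _ [_ [_ [_]]]; apply. Qed.

Lemma stellar_keep G : G \in D -> ~ {subset F <= G} -> G \in D'.
Proof. by move=> GD nFG; apply/(memD' (complex_face_ok cD GD)); left. Qed.

Lemma stellar_old G : G \in D' -> a \notin G -> G \in D /\ ~ {subset F <= G}.
Proof.
move=> GD' aG; have okG := complex_face_ok stellar_complex GD'.
case/(memD' okG): GD' => // -[A [B [C [aA [[BF nFB] [[CD [dC [H HD HFC]]] GE]]]]]].
have nA x : x \in A -> False.
  by move=> /[dup] /aA; rewrite inE => /eqP-> aA'; move: aG; rewrite GE !mem_cat aA'.
split.
  apply: (complex_sub cD HD okG) => x; rewrite GE !mem_cat HFC mem_cat.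
  by case/or3P=> [/nA // | /BF -> // | ->]; rewrite orbT.
move=> FG; apply: nFB => x xF; move: (FG x xF); rewrite GE !mem_cat.
by case/or3P=> [/nA // | // | xC]; move: (dC x xF); rewrite xC.
Qed.

Lemma stellar_cone G : G \in D' -> a \in G ->
  exists2 H, H \in D &
    [/\ {subset F <= H}, forall x, x \in G -> x != a -> x \in H & ~ {subset F <= G}].
Proof.
move=> GD' aG; have okG := complex_face_ok stellar_complex GD'.
case/(memD' okG): GD' => [[GD _] | [A [B [C [aA [[BF nFB] [[CD [dC [H HD HFC]]] GE]]]]]]].
  by move: (not_a GD aG); rewrite eqxx.
exists H => //; split; first by move=> x xF; rewrite HFC mem_cat xF.
  move=> x; rewrite GE !mem_cat HFC mem_cat => /or3P[/aA | /BF -> // | -> _]; last first.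
    by rewrite orbT.
  by rewrite inE => ->.
move=> FG; apply: nFB => x xF; move: (FG x xF); rewrite GE !mem_cat.
case/or3P=> [/aA | // | xC]; last by move: (dC x xF); rewrite xC.
by rewrite inE => /eqP xa; move: (not_a FD xF); rewrite xa eqxx.
Qed.

Lemma stellar_vertexb_old v : vertexb D' v -> v != a -> vertexb D v.
Proof.
case/hasP=> G GD' vG va.
have vD' : [:: v] \in D'.
  by apply: (complex_sub stellar_complex GD') => // x; rewrite inE => /eqP->.
have [|vD _] := stellar_old vD'; first by rewrite inE eq_sym.
exact: vertexb_of vD (mem_head _ _).
Qed.

Lemma stellar_vertexb v : ~ {subset F <= [:: v]} -> vertexb D v -> vertexb D' v.
Proof.
move=> nFv /hasP[G GD vG].
have vD : [:: v] \in D by apply: (complex_sub cD GD) => // x; rewrite inE => /eqP->.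
exact: vertexb_of (stellar_keep vD nFv) (mem_head _ _).
Qed.

Lemma stellar_dim1_leq : dim1 D' <= dim1 D.
Proof.
apply/bigmax_leqP_seq => G GD' _.
case aG: (a \in G); last by case: (stellar_old GD'); rewrite ?aG // => /leq_dim1.
have [H HD [FH GH nFG]] := stellar_cone GD' aG.
have [f fF fG] : exists2 f, f \in F & f \notin G.
  by apply/hasP; rewrite has_predC; apply/negP=> /allP.
apply: leq_trans (leq_dim1 HD).
have uH := face_ok_uniq (complex_face_ok cD HD).
have fH := FH f fF.
suff: size G <= size (a :: rem f H).
  by rewrite /= size_rem // prednK // -has_predT; apply/hasP; exists f.
apply: uniq_leq_size; first exact: face_ok_uniq (complex_face_ok stellar_complex GD').
move=> x xG; rewrite inE; case: eqVneq => //= xa.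
rewrite (mem_rem_uniq _ uH) inE (GH x xG xa) andbT.
by apply: contraNneq fG => <-.
Qed.

Lemma stellar_dim1_geq : dim1 D <= dim1 D'.
Proof.
apply/bigmax_leqP_seq => G GD _.
have [FG | nFG] := boolP (all (mem G) F); last first.
  by apply/leq_dim1/(stellar_keep GD) => /allP; apply/negP.
have {}FG : {subset F <= G} by apply/allP.
case EF: F Fn => [// | f F0] _.
have fG : f \in G by apply: FG; rewrite EF mem_head.
have uG := face_ok_uniq (complex_face_ok cD GD).
have aG : a \notin G by apply/negP=> /(not_a GD); rewrite eqxx.
have uaG : uniq (a :: rem f G) by rewrite /= rem_uniq // andbT; apply: contra aG => /mem_rem.
have G'D' : face_of (a :: rem f G) \in D'.
  apply/(memD' (face_of_ok _)); right.
  exists [:: a], [seq x <- F | x != f], [seq x <- G | x \notin F].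
  split=> //; split.
    split=> [x | sF]; first by rewrite mem_filter => /andP[].
    by have := sF f; rewrite EF mem_head mem_filter eqxx => /(_ isT).
  split.
    split; first exact: complex_filter.
    split; first by move=> x xF; rewrite mem_filter xF.
    by exists G => // x; rewrite mem_cat mem_filter; case xF: (x \in F) => //=; apply: FG.
  move=> x; rewrite mem_face_of /= !inE !mem_cat !mem_filter (mem_rem_uniq _ uG) inE.
  case: (x == a) => //=; case xF: (x \in F) => /=; first by rewrite (FG x xF) andbT orbF.
  by case: eqVneq => // xf; move: xF; rewrite xf EF mem_head.
apply: leq_trans (leq_dim1 G'D').
by rewrite size_face_of //= size_rem // prednK // -has_predT; apply/hasP; exists f.
Qed.

Lemma stellar_dim1 : dim1 D' = dim1 D.
Proof. by apply/eqP; rewrite eqn_leq stellar_dim1_leq stellar_dim1_geq. Qed.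

End StellarFacts.

Definition edge_sd (M : complex) u v := stellar_sd M (face_of [:: u; v]) (fresh M).

Section EdgeSubdivision.
Variables (M : complex) (u v : nat).
Hypotheses (cM : is_complex M) (uv : u != v) (Muv : adjacent M u v).

Let st : stellar M (face_of [:: u; v]) (fresh M) (edge_sd M u v).
Proof.
have FM : face_of [:: u; v] \in M.
  by case/hasP: Muv => G GM /andP[uG vG]; exact: (complex_edge cM GM uG vG).
apply: stellar_sd_stellar cM FM (@fresh_not_vertex M) _.
by move/(congr1 (fun s : face => u \in s)); rewrite mem_face_of mem_head.
Qed.

Lemma edge_sd_stellar_seq M' : stellar_seq (edge_sd M u v) M' -> stellar_seq M M'.
Proof. exact: ss_step st. Qed.

Lemma edge_sd_complex : is_complex (edge_sd M u v).
Proof. exact: stellar_complex st. Qed.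

Lemma edge_sd_dim1 : dim1 (edge_sd M u v) = dim1 M.
Proof. exact: stellar_dim1 st. Qed.

Lemma edge_sd_keep G : G \in M -> ~~ ((u \in G) && (v \in G)) -> G \in edge_sd M u v.
Proof. by move=> GM nuvG; apply: (stellar_keep cM st GM) => /sub_face_of2; apply/negP. Qed.

Lemma edge_sd_old G : G \in edge_sd M u v -> fresh M \notin G ->
  G \in M /\ ~~ ((u \in G) && (v \in G)).
Proof.
move=> GS bG; have [GM nuvG] := stellar_old cM st GS bG.
by split=> //; apply/negP=> /sub_face_of2.
Qed.

Lemma edge_sd_cone G : G \in edge_sd M u v -> fresh M \in G ->
  exists2 H, H \in M &
    [/\ u \in H, v \in H, forall x, x \in G -> x != fresh M -> x \in H
      & ~~ ((u \in G) && (v \in G))].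
Proof.
move=> GS bG; have [H HM [/sub_face_of2 /andP[uH vH] GH nuvG]] := stellar_cone st GS bG.
by exists H => //; split=> //; apply/negP=> /sub_face_of2.
Qed.

Lemma edge_sd_vertexb x : vertexb M x -> vertexb (edge_sd M u v) x.
Proof.
apply: (stellar_vertexb cM st) => sF.
have := sF u; have := sF v; rewrite !mem_face_of !inE !eqxx orbT.
by move=> /(_ isT) /eqP vx /(_ isT) /eqP ux; move: uv; rewrite ux vx eqxx.
Qed.

Lemma edge_sd_vertexb_old x : vertexb (edge_sd M u v) x -> x != fresh M -> vertexb M x.
Proof. by move=> xS; apply: (stellar_vertexb_old cM st xS). Qed.

End EdgeSubdivision.

Lemma descent (T : Type) (P : T -> Prop) (m : T -> nat) :
  (forall x, P x -> 0 < m x -> exists2 y, P y & m y < m x) ->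
  forall x, P x -> exists2 y, P y & m y = 0.
Proof.
move=> step x; have [n lt_xn] := ubnP (m x); elim: n x lt_xn => // n IHn x lt_xn Px.
have [m0 | /(step x Px) [y Py lt_yx]] := posnP (m x); first by exists x.
exact: IHn y (leq_trans lt_yx lt_xn) Py.
Qed.

Lemma count_filter_sub (T : eqType) (t : seq T) (P P' : pred T) :
  {in t, forall x, P x -> P' x} -> count P t = count P (filter P' t).
Proof.
move=> sPP'; rewrite count_filter; apply: eq_in_count => x xt /=.
by apply/idP/andP=> [Px | [] //]; split=> //; apply: sPP'.
Qed.

Lemma sub_in_count_lt (T : eqType) (t : seq T) (P P' : pred T) w :
  {in t, forall x, P x -> P' x} -> w \in t -> P' w -> ~~ P w -> count P t < count P' t.
Proof.
move=> sPP' wt P'w nPw; rewrite (count_filter_sub sPP') -(size_filter P' t).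
rewrite -(count_predC P (filter P' t)) -[X in X < _]addn0 ltn_add2l -has_count.
by apply/hasP; exists w; rewrite ?mem_filter ?P'w.
Qed.

Lemma count_uniq_leq (T : eqType) (s t : seq T) (P P' : pred T) : uniq s ->
  (forall x, x \in s -> P x -> (x \in t) && P' x) -> count P s <= count P' t.
Proof.
move=> us h; rewrite -!size_filter; apply: uniq_leq_size; first exact: filter_uniq.
by move=> x; rewrite !mem_filter => /andP[Px xs]; case/andP: (h x xs Px) => -> ->.
Qed.

Lemma eq_in_injective (aT rT : Type) (A : {pred aT}) (k k' : aT -> rT) :
  {in A &, injective k} -> {in A, k =1 k'} -> {in A &, injective k'}.
Proof. by move=> inj kk' y z yA zA; rewrite -!kk' //; apply: inj. Qed.

Lemma injective_cone (aT rT : eqType) (A : {pred aT}) a (k : aT -> rT) :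
  {in [predD1 A & a] &, injective k} ->
  (a \in A -> {in [predD1 A & a], forall y, k y != k a}) -> {in A &, injective k}.
Proof.
move=> inj ka y z yA zA kyz.
have [ya | ya] := eqVneq y a; have [za | za] := eqVneq z a.
- by rewrite ya za.
- by subst y; move: (ka yA z); rewrite !inE za zA kyz eqxx => /(_ isT).
- by subst z; move: (ka zA y); rewrite !inE ya yA kyz eqxx => /(_ isT).
- by apply: inj; rewrite // !inE ?ya ?za ?yA.
Qed.

Definition recolorable (M : complex) a (k : nat -> nat) (Q : seq nat) d :=
  [/\ is_complex M, uniq Q, d < size Q,
      forall G, G \in M -> a \in G -> {in [predD1 G & a] &, injective k}
    & forall G, G \in M -> a \in G -> count (fun v => (v != a) && (k v \in Q)) G <= d].

Record refinement (M0 : complex) (a : nat) (M : complex) : Prop := Refinement {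
  refinement_seq : stellar_seq M0 M;
  refinement_complex : is_complex M;
  refinement_dim1 : dim1 M = dim1 M0;
  refinement_vertexb : forall v, vertexb M0 v -> vertexb M v;
  refinement_keep : forall G, G \in M0 -> a \notin G -> G \in M }.

Record recoloring (M0 : complex) (a : nat) (k0 : nat -> nat) (Q : seq nat)
    (M : complex) (k : nat -> nat) : Prop := Recoloring {
  recoloring_refinement : refinement M0 a M;
  recoloring_faces : forall G, G \in M -> (G \in M0 /\ a \notin G) \/ {in G &, injective k};
  recoloring_palette : forall v, vertexb M v -> (v == a) || ~~ vertexb M0 v -> k v \in Q;
  recoloring_old : forall v, vertexb M0 v -> v != a -> k v = k0 v }.

Section RecolorLoop.
Variable d : nat.
Hypothesis IH : 0 < d -> forall M a k Q, recolorable M a k Q d.-1 ->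
  exists M' k', recoloring M a k Q M' k'.
Variables (M0 : complex) (a : nat) (k0 : nat -> nat) (Q : seq nat).
Hypothesis hyp : recolorable M0 a k0 Q d.

Let x := head 0 Q.
Let Q' := behead Q.

Let uQ : uniq Q. Proof. by case: hyp. Qed.
Let dQ : d < size Q. Proof. by case: hyp. Qed.
Let inj0 G : G \in M0 -> a \in G -> {in [predD1 G & a] &, injective k0}.
Proof. by case: hyp => _ _ _ h _; apply: h. Qed.
Let load0 G : G \in M0 -> a \in G -> count (fun v => (v != a) && (k0 v \in Q)) G <= d.
Proof. by case: hyp => _ _ _ _ h; apply: h. Qed.

Let EQ : Q = x :: Q'. Proof. by rewrite /x /Q'; case: (Q) dQ. Qed.
Let xQ' : x \notin Q'. Proof. by move: uQ; rewrite EQ => /andP[]. Qed.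
Let xQ : x \in Q. Proof. by rewrite EQ mem_head. Qed.

Definition bad_neighbor (M : complex) v := [&& v != a, adjacent M a v & k0 v == x].

Record loop_inv (M : complex) (k : nat -> nat) : Prop := LoopInv {
  inv_refinement : refinement M0 a M;
  inv_faces : forall G, G \in M -> G \in M0 \/ {in G &, injective k};
  inv_a : k a = x;
  inv_new : forall v, vertexb M v -> ~~ vertexb M0 v -> k v \in Q';
  inv_old : forall v, vertexb M0 v -> v != a -> k v = k0 v }.

Lemma loop_inv0 : loop_inv M0 (fun v => if v == a then x else k0 v).
Proof.
split=> [| G GM | | v -> // | v _ /negbTE-> //]; last by rewrite eqxx.
  by split=> //; [exact: ss_refl | case: hyp].
by left.
Qed.

Lemma loop_end M k : loop_inv M k -> count (bad_neighbor M) (flatten M0) = 0 ->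
  recoloring M0 a k0 Q M k.
Proof.
move=> [ref faces ka knew kold] c0.
have /hasPn good : ~~ has (bad_neighbor M) (flatten M0) by rewrite has_count c0.
split=> // [G GM | v vM /orP[/eqP-> | v0]]; last 2 first.
- by rewrite ka.
- exact/mem_behead/knew.
case: (faces G GM) => [G0 | ]; last by right.
case aG: (a \in G); [right | by left].
apply: (injective_cone (a := a)) => [| _ y].
  by apply: eq_in_injective (inj0 G0 aG) _ => y /andP[ya yG]; rewrite kold // (vertexb_of G0 yG).
case/andP=> ya yG; have y0 := vertexb_of G0 yG.
move: (good y); rewrite -vertexb_flatten y0 /bad_neighbor ya (adjacent_of GM aG yG) /=.
by rewrite kold // ka => /(_ isT).
Qed.

Section LoopStep.
Variables (M : complex) (k : nat -> nat) (w : nat).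
Hypotheses (inv : loop_inv M k) (w_bad : bad_neighbor M w) (w0 : w \in flatten M0).

Let b := fresh M.
Let M1 := edge_sd M a w.
Let cM : is_complex M := refinement_complex (inv_refinement inv).
Let aw : a != w. Proof. by case/and3P: w_bad; rewrite eq_sym. Qed.
Let Maw : adjacent M a w. Proof. by case/and3P: w_bad. Qed.
Let k0w : k0 w = x. Proof. by case/and3P: w_bad => _ _ /eqP. Qed.
Let kw : k w = x.
Proof. by rewrite (inv_old inv) ?vertexb_flatten // eq_sym. Qed.

Lemma bad_edge_face H : H \in M -> a \in H -> w \in H -> H \in M0.
Proof.
move=> HM aH wH; case: (inv_faces inv HM) => // injH.
by move: aw; rewrite (injH a w aH wH) ?eqxx // kw (inv_a inv).
Qed.

Lemma star_injective (A : {pred nat}) H : H \in M0 -> a \in H -> w \in H ->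
  {subset A <= H} -> ~~ ((a \in A) && (w \in A)) -> {in A &, injective k}.
Proof.
move=> H0 aH wH AH naw.
have kH y : y \in H -> y != a -> k y = k0 y.
  by move=> yH ya; apply: (inv_old inv) (vertexb_of H0 yH) ya.
have wa : w != a by rewrite eq_sym.
apply: (injective_cone (a := a)) => [y z | aA y].
  rewrite !inE => /andP[ya /AH yH] /andP[za /AH zH].
  rewrite (kH y yH ya) (kH z zH za) => k0yz.
  by apply: (inj0 H0 aH); rewrite ?inE ?ya ?za ?yH ?zH.
rewrite !inE => /andP[ya yA]; rewrite kH ?AH // (inv_a inv) -k0w.
apply: contraNneq naw => k0yw; rewrite aA -(inj0 H0 aH _ _ k0yw) //.
  by rewrite !inE ya AH.
by rewrite !inE wa wH.
Qed.

Lemma edge_cone_face G : G \in M1 -> b \in G ->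
  exists2 H, H \in M0 &
    [/\ a \in H, w \in H, {subset [predD1 G & b] <= H} & ~~ ((a \in G) && (w \in G))].
Proof.
move=> GM1 bG; have [H HM [aH wH GH nawG]] := edge_sd_cone cM Maw GM1 bG.
exists H; first exact: bad_edge_face.
by split=> // y; rewrite !inE => /andP[yb yG]; apply: GH.
Qed.

Lemma bad_neighbor_load_pos : 0 < d.
Proof.
case/hasP: Maw => H HM /andP[aH wH].
apply: leq_trans (load0 (bad_edge_face HM aH wH) aH); rewrite -has_count.
by apply/hasP; exists w; rewrite //= k0w xQ eq_sym aw.
Qed.

Lemma edge_recolorable : recolorable M1 b k Q' d.-1.
Proof.
split; first exact: edge_sd_complex.
- by move: uQ; rewrite EQ => /andP[].
- by move: dQ bad_neighbor_load_pos; rewrite EQ /=; lia.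
- move=> G GM1 bG; have [H H0 [aH wH GH nawG]] := edge_cone_face GM1 bG.
  apply: star_injective H0 aH wH GH _; rewrite !inE.
  by apply: contra nawG => /andP[/andP[_ ->] /andP[_ ->]].
(* [w] uses the palette color [x] in [H], and [x] is no longer in [Q']. *)
move=> G GM1 bG; have [H H0 [aH wH GH nawG]] := edge_cone_face GM1 bG.
rewrite -ltnS prednK ?bad_neighbor_load_pos //; apply: leq_trans (load0 H0 aH).
have uG := face_ok_uniq (complex_face_ok (edge_sd_complex cM Maw) GM1).
apply: (@leq_ltn_trans (count (fun v => [&& v != a, v != w & k0 v \in Q']) H)).
  apply: count_uniq_leq uG _ => y yG /andP[yb ykQ].
  have yH : y \in H by apply: GH; rewrite !inE yb.
  have ya : y != a by apply: contraNneq xQ' => ya; rewrite -(inv_a inv) -ya.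
  have yw : y != w by apply: contraNneq xQ' => yw; rewrite -kw -yw.
  by rewrite yH ya yw -(inv_old inv) // (vertexb_of H0 yH).
apply: (sub_in_count_lt (w := w)) => //; last by rewrite eqxx andbF.
  by move=> y _ /and3P[-> _ ykQ]; rewrite EQ inE ykQ orbT.
by rewrite eq_sym aw k0w xQ.
Qed.

Section StepResult.
Variables (M2 : complex) (k2 : nat -> nat).
Hypothesis rec : recoloring M1 b k Q' M2 k2.

Let b_new : ~~ vertexb M b. Proof. by apply/negP=> /vertexbP; apply: fresh_not_vertex. Qed.
Let b0 : ~~ vertexb M0 b.
Proof. by apply: contra b_new => /(refinement_vertexb (inv_refinement inv)). Qed.
Let vM1 v : vertexb M v -> vertexb M1 v := @edge_sd_vertexb M a w cM aw Maw v.

Let k2_old v : vertexb M0 v -> v != a -> k2 v = k0 v.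
Proof.
move=> v0 va; rewrite (recoloring_old rec) ?(inv_old inv) //.
  exact/vM1/(refinement_vertexb (inv_refinement inv)).
by apply: contraNneq b0 => <-.
Qed.

Let k2_a : k2 a = x.
Proof.
have aM : vertexb M a by case/hasP: Maw => H HM /andP[aH _]; apply: vertexb_of HM aH.
by rewrite (recoloring_old rec) ?(inv_a inv) ?vM1 ?vertexb_fresh.
Qed.

Lemma edge_loop_inv : loop_inv M2 k2.
Proof.
have [seq cM' dim vert keep] := inv_refinement inv.
have [[seq2 cM2 dim2 vert2 keep2] faces2 pal2 old2] := rec.
split=> //.
- split=> //.
  + exact: stellar_seq_trans seq (edge_sd_stellar_seq cM Maw seq2).
  + by rewrite dim2 edge_sd_dim1.
  + by move=> v /vert /vM1 /vert2.
  move=> G G0 aG; have GM := keep G G0 aG.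
  apply: keep2; first by apply: (edge_sd_keep cM Maw GM); rewrite (negbTE aG).
  by apply: contra b_new => /(vertexb_of GM).
- move=> G GM2; case: (faces2 G GM2) => [[GM1 bG] | inj2]; last by right.
  have [GM _] := edge_sd_old cM Maw GM1 bG.
  case: (inv_faces inv GM) => [G0 | injG]; [by left | right].
  apply: eq_in_injective injG _ => y yG.
  by rewrite old2 ?(vertexb_of GM1 yG) //; apply: contraNneq bG => <-.
- move=> v vM2 nv0; have [/(pal2 v vM2) // | ] := boolP ((v == b) || ~~ vertexb M1 v).
  rewrite negb_or negbK => /andP[vb vM1v].
  rewrite old2 // (inv_new inv) //; exact: edge_sd_vertexb_old vM1v vb.
Qed.

Lemma edge_bad_lt :
  count (bad_neighbor M2) (flatten M0) < count (bad_neighbor M) (flatten M0).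
Proof.
have bad2 v : v \in flatten M0 -> bad_neighbor M2 v -> bad_neighbor M v && (v != w).
  rewrite -vertexb_flatten => v0 /and3P[va /hasP[G GM2 /andP[aG vG]] /eqP k0v].
  case: (recoloring_faces rec GM2) => [[GM1 bG] | inj2].
    have [GM nawG] := edge_sd_old cM Maw GM1 bG.
    rewrite /bad_neighbor va (adjacent_of GM aG vG) k0v eqxx /=.
    by apply: contraNneq nawG => vw; rewrite aG -vw vG.
  have k2v : k2 v = x by rewrite k2_old.
  by move: va; rewrite -(inj2 a v aG vG) ?eqxx // k2_a k2v.
apply: (sub_in_count_lt (w := w)) => //.
- by move=> v v0 /(bad2 v v0) /andP[].
- by apply/negP=> /(bad2 w w0); rewrite eqxx andbF.
Qed.

End StepResult.
End LoopStep.

Lemma loop_step M k : loop_inv M k -> 0 < count (bad_neighbor M) (flatten M0) ->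
  exists2 Mk : complex * (nat -> nat), loop_inv Mk.1 Mk.2 &
    count (bad_neighbor Mk.1) (flatten M0) < count (bad_neighbor M) (flatten M0).
Proof.
move=> inv; rewrite -has_count => /hasP[w w0 w_bad].
have [M2 [k2 rec]] := IH (bad_neighbor_load_pos inv w_bad w0) (edge_recolorable inv w_bad w0).
by exists (M2, k2); [apply: edge_loop_inv rec | apply: edge_bad_lt rec].
Qed.

Lemma recolor_loop : exists M k, recoloring M0 a k0 Q M k.
Proof.
have [[M k] inv c0] := descent (P := fun Mk => loop_inv Mk.1 Mk.2)
  (m := fun Mk => count (bad_neighbor Mk.1) (flatten M0))
  (fun Mk => @loop_step Mk.1 Mk.2) (x := (M0, _)) loop_inv0.
by exists M, k; apply: loop_end.
Qed.

End RecolorLoop.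

Lemma recolor d M a k Q : recolorable M a k Q d -> exists M' k', recoloring M a k Q M' k'.
Proof.
elim: d M a k Q => [| d IHd] M a k Q h; first exact: (recolor_loop (d := 0)).
exact: (recolor_loop (d := d.+1)).
Qed.

Lemma proper_coloring_injective (M : complex) m (k : nat -> nat) :
  (forall v, vertexb M v -> k v < m) -> (forall G, G \in M -> {in G &, injective k}) ->
  proper_coloring M m k.
Proof.
move=> km inj; split=> [v /vertexbP | G GM _ u v uG vG]; first exact: km.
exact: contra_neq (inj G GM u v uG vG).
Qed.

Lemma proper_coloring_face (D : complex) m (k : nat -> nat) G u v :
  is_complex D -> proper_coloring D m k -> G \in D -> u \in G -> v \in G -> u != v ->
  k u != k v.
Proof.
move=> cD pk GD uG vG uv.
apply: (pk.2 _ (complex_edge cD GD uG vG) _ u v _ _ uv); rewrite ?mem_face_of ?inE ?eqxx ?orbT //.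
by rewrite size_face_of //= inE uv.
Qed.

Section Balance.
Variables (K L : complex) (c : nat -> nat).
Hypotheses (cK : is_complex K) (cL : is_complex L) (KL : subcomplex K L)
  (pc : proper_coloring K (dim1 K) c).

Let n := dim1 L.

Let c_lt v : vertexb K v -> c v < n.
Proof.
move=> /vertexbP /pc.1 /leq_trans; apply; apply/bigmax_leqP_seq => G GK _.
exact: leq_dim1 (KL GK).
Qed.

Definition initial_coloring v := if vertexb K v then c v else n + v.

Record admissible (M : complex) : Prop := Admissible {
  admissible_seq : stellar_seq L M;
  admissible_complex : is_complex M;
  admissible_dim1 : dim1 M = n;
  admissible_sub : subcomplex K M }.

Record admissible_coloring (M : complex) (k : nat -> nat) : Prop := AdmissibleColoring {
  coloring_admissible : admissible M;
  coloring_faces : forall G, G \in M -> {in G &, injective k};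
  coloring_extends : forall v, vertexb K v -> k v = c v }.

Lemma admissible_edge_sd M u v : admissible M -> adjacent M u v ->
  (forall G, G \in K -> ~~ ((u \in G) && (v \in G))) -> admissible (edge_sd M u v).
Proof.
move=> [seq cM dim KM] Muv nK.
split; first exact: stellar_seq_trans seq (edge_sd_stellar_seq cM Muv (ss_refl _)).
- exact: edge_sd_complex.
- by rewrite edge_sd_dim1.
by move=> G GK; apply: (edge_sd_keep cM Muv (KM G GK) (nK G GK)).
Qed.

Lemma initial_coloring_eq y z : y != z -> initial_coloring y = initial_coloring z ->
  vertexb K y && vertexb K z.
Proof.
rewrite /initial_coloring => yz; case Ky: (vertexb K y); case Kz: (vertexb K z) => // e.
- by move: (c_lt Ky); rewrite e; lia.
- by move: (c_lt Kz); rewrite -e; lia.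
- by move/eqP: yz; lia.
Qed.

Let PK := [seq (u, v) | u <- flatten K, v <- flatten K].

Definition conflict (M : complex) (p : nat * nat) :=
  [&& p.1 < p.2, adjacent M p.1 p.2 & initial_coloring p.1 == initial_coloring p.2].

Lemma conflict_step M : admissible M -> 0 < count (conflict M) PK ->
  exists2 M', admissible M' & count (conflict M') PK < count (conflict M) PK.
Proof.
move=> adM; have [_ cM _ KM] := adM.
rewrite -has_count => /hasP[[u v] uvK /and3P[/= uv Muv /eqP cuv]].
have u_v : u != v by rewrite neq_ltn uv.
have nK G : G \in K -> ~~ ((u \in G) && (v \in G)).
  move=> GK; apply/negP=> /andP[uG vG]; move: cuv; rewrite /initial_coloring.
  rewrite (vertexb_of GK uG) (vertexb_of GK vG); apply/eqP.
  exact: (proper_coloring_face cK pc GK uG vG u_v).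
exists (edge_sd M u v); first exact: admissible_edge_sd.
have less p : p \in PK -> conflict (edge_sd M u v) p -> conflict M p && (p != (u, v)).
  case: p => u0 v0 /allpairsP[[u1 v1] [/= u1K v1K [-> ->]]].
  case/and3P=> /= lt /hasP[G GS /andP[uG vG]] c01.
  have EM := complex_edge (edge_sd_complex cM Muv) GS uG vG.
  have bE : fresh M \notin face_of [:: u1; v1].
    rewrite mem_face_of !inE negb_or; apply/andP; split; rewrite eq_sym; apply: vertexb_fresh.
      by case/flattenP: u1K => G0 /KM G0M; apply: vertexb_of.
    by case/flattenP: v1K => G0 /KM G0M; apply: vertexb_of.
  have [EM' nuvE] := edge_sd_old cM Muv EM bE.
  have [u1E v1E] : u1 \in face_of [:: u1; v1] /\ v1 \in face_of [:: u1; v1].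
    by rewrite !mem_face_of !inE !eqxx orbT.
  rewrite /conflict lt c01 (adjacent_of EM' u1E v1E) /=.
  by apply: contraNneq nuvE => -[-> ->]; rewrite !mem_face_of !inE !eqxx orbT.
apply: (sub_in_count_lt (w := (u, v))) => //.
- by move=> p pK /(less p pK) /andP[].
- by rewrite /conflict /= uv Muv cuv eqxx.
- by apply/negP=> /(less _ uvK); rewrite eqxx andbF.
Qed.

Lemma conflict_free M : count (conflict M) PK = 0 ->
  forall G, G \in M -> {in G &, injective initial_coloring}.
Proof.
move=> c0 G GM y z yG zG e; apply/eqP; apply: contraT => yz.
have /hasPn none : ~~ has (conflict M) PK by rewrite has_count c0.
have /andP[Ky Kz] := initial_coloring_eq yz e.
have mPK y' z' : vertexb K y' -> vertexb K z' -> (y', z') \in PK.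
  by rewrite !vertexb_flatten => y'K z'K; apply/allpairsP; exists (y', z').
case: (ltngtP y z) => [lt | lt | eq]; last by rewrite eq eqxx in yz.
- by move: (none _ (mPK _ _ Ky Kz)); rewrite /conflict /= lt (adjacent_of GM yG zG) e eqxx.
- by move: (none _ (mPK _ _ Kz Ky)); rewrite /conflict /= lt (adjacent_of GM zG yG) e eqxx.
Qed.

Lemma conflict_free_refinement : exists M, admissible_coloring M initial_coloring.
Proof.
have [M adM c0] := descent (@conflict_step) (x := L)
  (Admissible (ss_refl L) cL erefl KL).
exists M; split=> //; first exact: conflict_free.
by move=> v Kv; rewrite /initial_coloring Kv.
Qed.

Definition high (M : complex) (k : nat -> nat) v := vertexb M v && (n <= k v).

Lemma high_recolorable M k a : admissible_coloring M k -> high M k a ->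
  recolorable M a k (iota 0 n) n.-1.
Proof.
move=> [[_ cM dim _] inj _] /andP[aM _].
have n_pos : 0 < n.
  by case/hasP: aM => G GM aG; rewrite -dim; apply: leq_trans (leq_dim1 GM); case: (G) aG.
split=> //; first exact: iota_uniq.
- by rewrite size_iota; lia.
- by move=> G GM _ y z; rewrite !inE => /andP[_ yG] /andP[_ zG]; apply: (inj G GM).
move=> G GM aG; rewrite -ltnS prednK // -dim; apply: leq_trans (leq_dim1 GM).
by rewrite -count_predT; apply: (sub_in_count_lt (w := a)); rewrite ?eqxx.
Qed.

Lemma recolor_admissible M k a M2 k2 :
  admissible_coloring M k -> high M k a -> recoloring M a k (iota 0 n) M2 k2 ->
  admissible_coloring M2 k2 /\ (forall v, high M2 k2 v -> high M k v && (v != a)).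
Proof.
move=> [[seq cM dim KM] inj ext] /andP[aM na] [[seq2 cM2 dim2 vert2 keep2] faces2 pal2 old2].
have aK : ~~ vertexb K a by apply: contraTN na => Ka; rewrite -ltnNge ext ?c_lt.
have vK v : vertexb K v -> vertexb M v by case/hasP=> G /KM; apply: vertexb_of.
split; first split.
- split=> //; first exact: stellar_seq_trans seq seq2.
    by rewrite dim2.
  move=> G GK; apply: (keep2 _ (KM G GK)).
  by apply: contra aK => /(vertexb_of GK).
- move=> G GM2; case: (faces2 G GM2) => [[GM aG] | //].
  apply: eq_in_injective (inj G GM) _ => y yG.
  by rewrite old2 ?(vertexb_of GM yG) //; apply: contraNneq aG => <-.
- move=> v Kv; rewrite old2 ?ext ?vK //.
  by apply: contraNneq aK => <-.
move=> v /andP[vM2 nv]; have [/(pal2 v vM2) | ] := boolP ((v == a) || ~~ vertexb M v).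
  by rewrite mem_iota add0n => /andP[_]; rewrite ltnNge nv.
by rewrite negb_or negbK => /andP[va vM]; rewrite /high vM va -(old2 v vM va) nv.
Qed.

Lemma recolor_high_vertex U M k : admissible_coloring M k -> {subset high M k <= U} ->
  0 < count (high M k) U ->
  exists2 Mk : complex * (nat -> nat),
    admissible_coloring Mk.1 Mk.2 /\ {subset high Mk.1 Mk.2 <= U} &
    count (high Mk.1 Mk.2) U < count (high M k) U.
Proof.
move=> acM hU; rewrite -has_count => /hasP[a aU ha].
have [M2 [k2 rec]] := recolor (high_recolorable acM ha).
have [acM2 hi] := recolor_admissible acM ha rec.
exists (M2, k2); first by split=> // v /hi /andP[/hU].
apply: (sub_in_count_lt (w := a)) => //.
- by move=> v _ /hi /andP[].
- by apply/negP=> /hi; rewrite eqxx andbF.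
Qed.

Lemma balanced_refinement :
  exists M k, admissible_coloring M k /\ forall v, vertexb M v -> k v < n.
Proof.
have [M1 ac1] := conflict_free_refinement.
have hU1 : {subset high M1 initial_coloring <= flatten M1}.
  by move=> v /andP[]; rewrite vertexb_flatten.
(* Recoloring creates no new high vertices, so they can be counted in the
   vertex list of [M1]. *)
have [[M k] /= [acM hU] c0] := descent
  (P := fun Mk => admissible_coloring Mk.1 Mk.2 /\ {subset high Mk.1 Mk.2 <= flatten M1})
  (m := fun Mk => count (high Mk.1 Mk.2) (flatten M1))
  (fun Mk '(conj acM hU) => recolor_high_vertex acM hU) (x := (M1, _)) (conj ac1 hU1).
exists M, k; split=> // v vM; rewrite ltnNge; apply/negP=> nv.
have /hasPn none : ~~ has (high M k) (flatten M1) by rewrite has_count c0.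
by have := none v (hU v (_ : high M k v)); rewrite /high vM nv => /(_ isT).
Qed.

End Balance.

Theorem corollary3p2 (K L : complex) (c : nat -> nat) :
  is_complex K -> is_complex L -> subcomplex K L ->
  proper_coloring K (dim1 K) c ->
  exists L' : complex,
    stellar_seq L L' /\
    subcomplex K L' /\
    balanced L' /\
    exists c' : nat -> nat,
      proper_coloring L' (dim1 L') c' /\
      (forall v, is_vertex K v -> c' v = c v).
Proof.
move=> cK cL KL pc.
have [M [k [[[seq _ dim KM] inj ext] klt]]] := balanced_refinement cK cL KL pc.
have pcM : proper_coloring M (dim1 M) k by apply: proper_coloring_injective; rewrite ?dim.
exists M; do !split=> //; first by exists k.
by exists k; split=> // v /vertexbP; apply: ext.
Qed.
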